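(* Let $\rho:\mathfrak{S}_n\to\mathrm{GL}_N(\mathbb{R})$ be a representation and $\varphi:\mathcal{T}_n\to\mathfrak{gl}_N(\mathbb{R})$ a Lie algebra representation compatible with $\rho$, i.e. $\rho(w)\varphi(t_{ij})\rho(w)^{-1}=\varphi(t_{w(i),w(j)})$. Let $R:B_n\to\mathrm{GL}_N(\mathbb{R}[[h]])$ be the representation obtained from a real Drinfeld associator $\Phi\in M_1(\mathbb{R})$ as described in the context. If $\rho(\mathfrak{S}_n)\subset O_N(\mathbb{R})$ and ${}^t\varphi(t_{ij})=\varphi(t_{ij})$ for all $i,j$, then $R(B_n)\subset U_N^{\epsilon}(\mathbb{R}((h)))$.
   Context: $\mathcal{T}_n$ is the Lie algebra (over $\mathbb{R}$) with generators $t_{ij}$, $1\le i,j\le n$, and relations $t_{ii}=0$, $t_{ij}=t_{ji}$, $[t_{ij},t_{ik}+t_{kj}]=0$, $[t_{ij},t_{kl}]=0$ when $\#\{i,j,k,l\}=4$; $\mathfrak{S}_n$ acts by $w.t_{ij}=t_{w(i)w(j)}$; $\widehat{\mathcal{T}}_n$ is its completion for the grading $\deg t_{ij}=1$. $M_1(\mathbb{R})$ denotes the set of Drinfeld associators with real coefficients (group-like formal series $\Phi(A,B)=\exp\Psi(A,B)$, $\Psi$ a Lie series, satisfying Drinfeld's pentagon and hexagon relations with parameter normalized so that) each $\Phi$ determines a group morphism $B_n\to\mathfrak{S}_n\ltimes\exp\widehat{\mathcal{T}}_n$ with $\sigma_1\mapsto(1\,2)\exp(t_{12})$, and each $\sigma_i$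 mapped to a conjugate of $(i\ i{+}1)\exp(t_{i,i+1})$ by an element $\Phi(x,y)$ where $x,y$ are linear combinations of the $t_{jk}$. Composing with $t_{ij}\mapsto h\varphi(t_{ij})$ and $w\mapsto\rho(w)$ yields $R:B_n\to\mathrm{GL}_N(\mathbb{R}[[h]])$. $\epsilon$ is the automorphism $f(h)\mapsto f(-h)$ of $\mathbb{R}((h))$, and $U_N^{\epsilon}(\mathbb{R}((h)))=\{X\in\mathrm{GL}_N(\mathbb{R}((h)))\mid X^{-1}={}^t\epsilon(X)\}$. *)

From HB Require Import structures.
From mathcomp Require Import all_boot all_order all_algebra all_fingroup.
From mathcomp Require Import reals.
Set Implicit Arguments. Unset Strict Implicit. Unset Printing Implicit Defensive.
Import Order.TTheory GRing.Theory Num.Theory.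
Local Open Scope ring_scope.

(* Noncommutative formal power series over a letter type L: a series is the *)
(* function giving the coefficient of each word.                             *)
Section NSeries.
Variables (R : fieldType) (L : eqType).

Definition nser := seq L -> R.
Definition nsone : nser := fun w => if w is [::] then 1 else 0.
Definition nszero : nser := fun _ => 0.
Definition nsletter (a : L) : nser := fun w => if w == [:: a] then 1 else 0.
Definition nsadd (F G : nser) : nser := fun w => F w + G w.
Definition nssub (F G : nser) : nser := fun w => F w - G w.
Definition nsopp (F : nser) : nser := fun w => - F w.
Definition nsscale (c : R) (F : nser) : nser := fun w => c * F w.
Definition nsmul (F G : nser) : nser :=
  fun w => \sum_(k < (size w).+1) F (take k w) * G (drop k w).
Definition nsbr (F G : nser) : nser := nssub (nsmul F G) (nsmul G F).
Fixpoint nsexpn (F : nser) (k : nat) : nser :=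
  if k is k'.+1 then nsmul F (nsexpn F k') else nsone.
(* exponential of a series with zero constant term *)
Definition nsexp (F : nser) : nser :=
  fun w => \sum_(k < (size w).+1) (k`!%:R)^-1 * nsexpn F k w.
Definition nshom (d : nat) (F : nser) : nser :=
  fun w => if size w == d then F w else 0.

Inductive lie_poly : nser -> Prop :=
| lie_letter a : lie_poly (nsletter a)
| lie_zero : lie_poly nszero
| lie_add F G : lie_poly F -> lie_poly G -> lie_poly (nsadd F G)
| lie_scale c F : lie_poly F -> lie_poly (nsscale c F)
| lie_br F G : lie_poly F -> lie_poly G -> lie_poly (nsbr F G)
| lie_ext F G : (forall w, F w = G w) -> lie_poly F -> lie_poly G.

Definition lie_series (F : nser) := forall d, lie_poly (nshom d F).

Definition grouplike (Phi : nser) :=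
  exists Psi, lie_series Psi /\ forall w, Phi w = nsexp Psi w.

(* substitution of series U, V (zero constant terms) into a series in two
   noncommuting variables A (= false) and B (= true) *)
Fixpoint bwords (k : nat) : seq (seq bool) :=
  if k is k'.+1 then [seq b :: w | b <- [:: false; true], w <- bwords k']
  else [:: [::]].

Fixpoint nsword (U V : nser) (u : seq bool) : nser :=
  if u is b :: u' then nsmul (if b then V else U) (nsword U V u') else nsone.

Definition nssubst (Phi : seq bool -> R) (U V : nser) : nser :=
  fun w => \sum_(k < (size w).+1) \sum_(u <- bwords k) Phi u * nsword U V u w.

End NSeries.

Section Associator.
Variable R : fieldType.

Definition nsA : nser R bool := nsletter R false.
Definition nsB : nser R bool := nsletter R true.
Definition nsC : nser R bool := nsopp (nsadd nsA nsB).

Definition assoc_inv (Phi : seq bool -> R) :=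
  forall w, nsmul (nssubst Phi nsB nsA) Phi w = nsone R w.

(* hexagon, normalized so that sigma_1 |-> (1 2) exp(t_12):
   e^{A} Phi(C,A) e^{C} Phi(B,C) e^{B} Phi(A,B) = 1 with A + B + C = 0 *)
Definition assoc_hexagon (Phi : seq bool -> R) :=
  forall w,
    nsmul (nsexp nsA) (nsmul (nssubst Phi nsC nsA) (nsmul (nsexp nsC)
      (nsmul (nssubst Phi nsB nsC) (nsmul (nsexp nsB) Phi)))) w = nsone R w.

(* the completed enveloping algebra of T_4: free series on the letters t_ij
   modulo the closed (homogeneous) ideal generated by the defining relations *)
Notation L4 := ('I_4 * 'I_4)%type.
Definition t4 (i j : 'I_4) : nser R L4 := nsletter R (i, j).

Inductive t4_ideal : nser R L4 -> Prop :=
| ti_zero : t4_ideal (@nszero R L4)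
| ti_diag i : t4_ideal (t4 i i)
| ti_sym i j : t4_ideal (nssub (t4 i j) (t4 j i))
| ti_rel3 i j k : uniq [:: i; j; k] ->
    t4_ideal (nsbr (t4 i j) (nsadd (t4 i k) (t4 k j)))
| ti_rel4 i j k l : uniq [:: i; j; k; l] -> t4_ideal (nsbr (t4 i j) (t4 k l))
| ti_add F G : t4_ideal F -> t4_ideal G -> t4_ideal (nsadd F G)
| ti_scale c F : t4_ideal F -> t4_ideal (nsscale c F)
| ti_mull a F : t4_ideal F -> t4_ideal (nsmul (nsletter R a) F)
| ti_mulr F a : t4_ideal F -> t4_ideal (nsmul F (nsletter R a))
| ti_ext F G : (forall w, F w = G w) -> t4_ideal F -> t4_ideal G.

(* equality in the completion \hat U(T_4) (the ideal is homogeneous) *)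
Definition U4eq (F G : nser R L4) :=
  forall d, t4_ideal (nshom d (nssub F G)).

Definition i0 : 'I_4 := @Ordinal 4 0 isT.
Definition i1 : 'I_4 := @Ordinal 4 1 isT.
Definition i2 : 'I_4 := @Ordinal 4 2 isT.
Definition i3 : 'I_4 := @Ordinal 4 3 isT.

(* pentagon (indices 1,2,3,4 of the paper are i0,i1,i2,i3):
   Phi(t12,t23+t24) Phi(t13+t23,t34) = Phi(t23,t34) Phi(t12+t13,t24+t34) Phi(t12,t23) *)
Definition assoc_pentagon (Phi : seq bool -> R) :=
  U4eq
    (nsmul (nssubst Phi (t4 i0 i1) (nsadd (t4 i1 i2) (t4 i1 i3)))
           (nssubst Phi (nsadd (t4 i0 i2) (t4 i1 i2)) (t4 i2 i3)))
    (nsmul (nssubst Phi (t4 i1 i2) (t4 i2 i3))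
      (nsmul (nssubst Phi (nsadd (t4 i0 i1) (t4 i0 i2)) (nsadd (t4 i1 i3) (t4 i2 i3)))
             (nssubst Phi (t4 i0 i1) (t4 i1 i2)))).

Definition drinfeld_associator (Phi : seq bool -> R) :=
  [/\ grouplike Phi, assoc_inv Phi, assoc_hexagon Phi & assoc_pentagon Phi].

End Associator.

(* Matrix-valued formal power series in h: X = \sum_k h^k X k               *)
Section MxSeries.
Variables (R : fieldType) (N : nat).

Definition ms := nat -> 'M[R]_N.
Definition msone : ms := fun k => if k == 0%N then 1%:M else 0.
Definition msconst (M : 'M[R]_N) : ms := fun k => if k == 0%N then M else 0.
Definition msmul (X Y : ms) : ms := fun k => \sum_(j < k.+1) X j *m Y (k - j)%N.
Fixpoint mxpow (M : 'M[R]_N) (k : nat) : 'M[R]_N :=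
  if k is k'.+1 then M *m mxpow M k' else 1%:M.
Definition msexph (M : 'M[R]_N) : ms := fun k => (k`!%:R)^-1 *: mxpow M k.
Definition mxword (P Q : 'M[R]_N) (u : seq bool) : 'M[R]_N :=
  foldr (fun b M => (if b then Q else P) *m M) 1%:M u.
Definition mssubst (Phi : seq bool -> R) (P Q : 'M[R]_N) : ms :=
  fun k => \sum_(u <- bwords k) Phi u *: mxword P Q u.
(* inverse of a series whose constant term is invertible *)
Fixpoint msinv_seq (X : ms) (k : nat) : seq 'M[R]_N :=
  if k is k'.+1 then
    let s := msinv_seq X k' in
    rcons s (- (invmx (X 0%N) *m \sum_(j < k'.+1) X j.+1 *m nth 0 s (k' - j)%N))
  else [:: invmx (X 0%N)].
Definition msinv (X : ms) : ms := fun k => nth 0 (msinv_seq X k) k.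
Definition mstr (X : ms) : ms := fun k => (X k)^T.
Definition mseps (X : ms) : ms := fun k => (-1) ^+ k *: X k.
Definition unitary_eps (X : ms) :=
  forall k, msmul X (mseps (mstr X)) k = msone k /\
            msmul (mseps (mstr X)) X k = msone k.
End MxSeries.

Lemma gen_lo_proof n (i : 'I_n.-1) : (i < n)%N.
Proof. case: n i => [|n] [i /= Hi] //; by apply: ltn_trans Hi _. Qed.
Lemma gen_hi_proof n (i : 'I_n.-1) : (i.+1 < n)%N.
Proof. by case: n i => [|n] [i /= Hi]. Qed.

(* for i : 'I_n.-1 (the generator sigma_{i+1}), the indices i, i+1 in 'I_n *)
Definition gen_lo n (i : 'I_n.-1) : 'I_n := Ordinal (gen_lo_proof i).
Definition gen_hi n (i : 'I_n.-1) : 'I_n := Ordinal (gen_hi_proof i).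

Section Reps.
Variables (R : fieldType) (n N : nat).

Definition mxcomm (A B : 'M[R]_N) := A *m B - B *m A.

Definition is_Tn_rep (phi : 'I_n -> 'I_n -> 'M[R]_N) :=
  [/\ forall i, phi i i = 0,
      forall i j, phi i j = phi j i,
      forall i j k, uniq [:: i; j; k] -> mxcomm (phi i j) (phi i k + phi k j) = 0
    & forall i j k l, uniq [:: i; j; k; l] -> mxcomm (phi i j) (phi k l) = 0].

(* phi(x) for x = \sum_{j,k} c j k t_jk *)
Definition phil (phi : 'I_n -> 'I_n -> 'M[R]_N) (c : 'I_n -> 'I_n -> R) : 'M[R]_N :=
  \sum_j \sum_k c j k *: phi j k.

(* R(sigma_{i+1}) = Phi(x,y)^{-1} rho((i i+1)) exp(h phi(t_{i,i+1})) Phi(x,y)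
   with x = hphi(x_i), y = hphi(y_i), x_i, y_i linear combinations of the t_jk *)
Definition Bn_gen (rho : {perm 'I_n} -> 'M[R]_N) (phi : 'I_n -> 'I_n -> 'M[R]_N)
  (Phi : seq bool -> R) (cx cy : 'I_n.-1 -> 'I_n -> 'I_n -> R) (i : 'I_n.-1) : ms R N :=
  let X := mssubst Phi (phil phi (cx i)) (phil phi (cy i)) in
  msmul (msinv X)
    (msmul (msconst (rho (tperm (gen_lo i) (gen_hi i))))
       (msmul (msexph (phi (gen_lo i) (gen_hi i))) X)).

(* value of R on a word in the generators sigma_i^{+1} (true) / sigma_i^{-1} (false);
   R(B_n) is the set of these values *)
Definition Bn_word rho phi Phi cx cy (w : seq (bool * 'I_n.-1)) : ms R N :=
  foldr (fun bi Y => msmul (if bi.1 then Bn_gen rho phi Phi cx cy bi.2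
                            else msinv (Bn_gen rho phi Phi cx cy bi.2)) Y)
        (msone R N) w.

End Reps.

(* For a matrix series X in h put X^* := eps(X^T).  This is an involutive
   anti-automorphism of the algebra of series, and U_N^eps is the group of
   series with X X^* = X^* X = 1, so it suffices that the factors of each
   R(sigma_i) are unitary.  rho(w) is a constant orthogonal matrix, and
   exp(h t)^* = exp(-h t) for t symmetric.  For x, y symmetric, the series
   Phi(hx, hy)^* is obtained by substituting S(Phi), where
   S(F)(w) = (-1)^|w| F(rev w) is the antipode of the free algebra; as Phi is
   the exponential of a Lie series Psi and S = -id on Lie elements,
   Phi(hx, hy)^* = exp(-Psi(hx, hy)) = Phi(hx, hy)^-1. *)
From HB Require Import structures.
From mathcomp Require Import all_boot all_order all_algebra all_fingroup.
From mathcomp Require Import reals boolp.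
From mathcomp Require Import zify ring.
Set Implicit Arguments. Unset Strict Implicit. Unset Printing Implicit Defensive.
Import Order.TTheory GRing.Theory Num.Theory.
Local Open Scope ring_scope.

Lemma sum_triangle (V : zmodType) K (F : nat -> nat -> V) :
  \sum_(0 <= m < K) \sum_(0 <= a < m.+1) F a (m - a)%N =
  \sum_(0 <= a < K) \sum_(0 <= b < K - a) F a b.
Proof.
elim: K => [|K IH]; first by rewrite !big_geq.
rewrite big_nat_recr //= IH [in RHS]big_nat_recr //= subSn // subnn.
rewrite big_nat_recr //= [X in _ = _ + X]big_nat1 subnn addrA; congr (_ + _).
rewrite -big_split; apply: eq_big_nat => a /andP[_ ha].
by rewrite (subSn (ltnW ha)) big_nat_recr.
Qed.

Section ExpCoefficients.
Variables (R : numFieldType) (V : lmodType R).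

Lemma sum_sign_fact_eq0 m : (0 < m)%N ->
  \sum_(0 <= a < m.+1) ((-1) ^+ a / a`!%:R * ((m - a)`!%:R)^-1) = 0 :> R.
Proof.
move=> m_gt0; have fact_neq0 k : (k`!%:R : R) != 0 by rewrite pnatr_eq0 -lt0n fact_gt0.
transitivity (\sum_(0 <= a < m.+1)
    (m`!%:R)^-1 * (((1 : R) ^+ (m - a) * (-1) ^+ a) *+ 'C(m, a))).
  apply: eq_big_nat => a /andP[_ ha]; rewrite ltnS in ha.
  have binC_neq0 : ('C(m, a)%:R : R) != 0 by rewrite pnatr_eq0 -lt0n bin_gt0.
  rewrite expr1n mul1r -mulr_natr -(bin_fact ha) !natrM.
  by field; rewrite binC_neq0 !fact_neq0.
by rewrite -mulr_sumr big_mkord -exprDn subrr expr0n gtn_eqF // mulr0.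
Qed.

(* The Cauchy product of the coefficients of exp(-x) and exp(x). *)
Lemma sum_expN_exp_coef K (f : nat -> V) :
  (0 < K)%N -> (forall m, (K <= m)%N -> f m = 0) ->
  \sum_(a < K) \sum_(b < K) (((-1) ^+ a / a`!%:R) * (b`!%:R)^-1) *: f (a + b)%N
  = f 0%N.
Proof.
move=> K_gt0 f_eq0.
pose G a b := (((-1) ^+ a / a`!%:R) * (b`!%:R)^-1) *: f (a + b)%N.
transitivity (\sum_(0 <= a < K) \sum_(0 <= b < K - a) G a b).
  rewrite big_mkord; apply: eq_bigr => a _.
  rewrite -(big_mkord xpredT (G a)) (big_cat_nat _ (n := (K - a)%N)) ?leq_subr //=.
  rewrite [X in _ + X]big1_seq ?addr0 // => b /andP[_].
  by rewrite mem_index_iota => /andP[hb _]; rewrite /G f_eq0 ?scaler0 //; lia.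
rewrite -sum_triangle (eq_big_nat _ _ (F2 := fun m =>
    (\sum_(0 <= a < m.+1) ((-1) ^+ a / a`!%:R * ((m - a)`!%:R)^-1)) *: f m)).
  case: K K_gt0 {f_eq0} => // K _; rewrite big_nat_recl //= big_nat1 subnn.
  rewrite expr0 !invr1 !mulr1 scale1r big1_seq ?addr0 // => m _.
  by rewrite sum_sign_fact_eq0 ?scale0r.
move=> m _; rewrite scaler_suml; apply: eq_big_nat => a /andP[_ ha].
by rewrite /G subnKC // -ltnS.
Qed.

End ExpCoefficients.

Section MatrixSeries.
Variables (R : fieldType) (N : nat).
Local Notation ms := (ms R N).
Local Notation ms1 := (msone R N).
Implicit Types (X Y Z : ms) (A B : 'M[R]_N).

Lemma msmul_rev X Y k : msmul X Y k = \sum_(j < k.+1) X (k - j)%N *m Y j.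
Proof.
rewrite /msmul (reindex_inj rev_ord_inj) /=.
by apply: eq_bigr => j _; rewrite (sub_ordK j).
Qed.

Lemma msmulA X Y Z : msmul X (msmul Y Z) = msmul (msmul X Y) Z.
Proof.
apply: funext => i; rewrite /msmul.
pose c j k := X j *m (Y (i - j - k)%N *m Z k).
transitivity (\sum_(j < i.+1) \sum_(k < i.+1 | (k <= i - j)%N) c j k).
  apply: eq_bigr => /= j _; rewrite -/(msmul Y Z _) msmul_rev mulmx_sumr /=.
  by rewrite (big_ord_narrow_leq (leq_subr _ _)).
rewrite (exchange_big_dep predT) //= [RHS](reindex_inj rev_ord_inj) /=.
apply: eq_bigr => k _; rewrite (sub_ordK k).
transitivity (\sum_(j < i.+1 | (j <= i - k)%N) c j k).
  apply: eq_bigl => j; rewrite -ltnS -(ltnS j) -!subSn ?leq_ord //.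
  by rewrite -subn_gt0 -(subn_gt0 j) -!subnDA addnC.
rewrite (big_ord_narrow_leq (leq_subr _ _)) mulmx_suml /=.
by apply: eq_bigr => j _; rewrite /c -!subnDA addnC mulmxA.
Qed.

Lemma msmul1l X : msmul ms1 X = X.
Proof.
apply: funext => k; rewrite /msmul big_ord_recl subn0 mul1mx.
by rewrite big1 ?addr0 // => j _; rewrite mul0mx.
Qed.

Lemma msmul1r X : msmul X ms1 = X.
Proof.
apply: funext => k; rewrite msmul_rev big_ord_recl subn0 mulmx1.
by rewrite big1 ?addr0 // => j _; rewrite mulmx0.
Qed.

Lemma msmul_const A B : msmul (msconst A) (msconst B) = msconst (A *m B).
Proof.
apply: funext => -[|k]; rewrite /msmul /msconst ?big_ord1 //.
rewrite big1 // => j _; case: eqP => [->|]; last by rewrite mul0mx.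
by rewrite mulmx0.
Qed.

Lemma msinv_seq_size X k : size (msinv_seq X k) = k.+1.
Proof. by elim: k => [|k IH] //=; rewrite size_rcons IH. Qed.

Lemma nth_msinv_seq X k j : (j <= k)%N -> nth 0 (msinv_seq X k) j = msinv X j.
Proof.
elim: k j => [|k IH] j; first by rewrite leqn0 => /eqP ->.
rewrite leq_eqVlt => /orP[/eqP -> //|hj].
by rewrite /= nth_rcons msinv_seq_size hj IH.
Qed.

Lemma msinvS X k :
  msinv X k.+1 = - (invmx (X 0%N) *m \sum_(j < k.+1) X j.+1 *m msinv X (k - j)%N).
Proof.
rewrite {1}/msinv /= nth_rcons msinv_seq_size ltnn eqxx.
by congr (- (_ *m _)); apply: eq_bigr => j _; rewrite nth_msinv_seq // leq_subr.
Qed.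

Lemma msmulV X : X 0%N \in unitmx -> msmul X (msinv X) = ms1.
Proof.
move=> X0_unit; apply: funext => -[|k].
  by rewrite /msmul big_ord1 /msinv /= mulmxV.
rewrite /msmul big_ord_recl subn0 msinvS mulmxN mulmxA mulmxV // mul1mx.
rewrite /msone /=; apply/eqP; rewrite addrC subr_eq0; apply/eqP.
by apply: eq_bigr => j _; rewrite /bump /= add1n subSS.
Qed.

Lemma msmul_linv_unique X Y Z : msmul Y X = ms1 -> msmul X Z = ms1 -> Z = Y.
Proof. by move=> YX XZ; rewrite -[Z]msmul1l -YX -msmulA XZ msmul1r. Qed.

Definition msopp X : ms := fun k => - X k.

Lemma msoppK X : msopp (msopp X) = X.
Proof. by apply: funext => k; rewrite /msopp opprK. Qed.

Fixpoint mspow X (m : nat) : ms :=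
  if m is m'.+1 then msmul X (mspow X m') else ms1.

Definition msexp X : ms := fun d => \sum_(m < d.+1) (m`!%:R)^-1 *: mspow X m d.

Definition msh A : ms := fun k => if k == 1%N then A else 0.

Lemma mspowD X a b : msmul (mspow X a) (mspow X b) = mspow X (a + b).
Proof. by elim: a => [|a IH] /=; rewrite ?msmul1l // -msmulA IH. Qed.

Lemma mspowSr X m : mspow X m.+1 = msmul (mspow X m) X.
Proof. by rewrite -addn1 -mspowD /= msmul1r. Qed.

Lemma mspow_eq0 X m d : X 0%N = 0 -> (d < m)%N -> mspow X m d = 0.
Proof.
move=> X0; elim: m d => [//|m IH] d hd /=.
rewrite /msmul big1 // => -[[|j] hj] _ /=; first by rewrite X0 mul0mx.
by rewrite IH ?mulmx0 //; lia.
Qed.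

Lemma mspowN X m k : mspow (msopp X) m k = (-1) ^+ m *: mspow X m k.
Proof.
elim: m k => [|m IH] k /=; first by rewrite scale1r.
rewrite /msmul scaler_sumr; apply: eq_bigr => j _.
by rewrite IH /msopp mulNmx -scalemxAr exprS mulN1r scaleNr.
Qed.

Lemma msexp_widen X j K : X 0%N = 0 -> (j < K)%N ->
  msexp X j = \sum_(a < K) (a`!%:R)^-1 *: mspow X a j.
Proof.
move=> X0 hj; rewrite /msexp (big_ord_widen K (fun a => (a`!%:R)^-1 *: mspow X a j) hj).
rewrite big_mkcond /=; apply: eq_bigr => a _; case: ifP => // ha.
by rewrite mspow_eq0 ?scaler0 // ltnNge -ltnS ha.
Qed.

Lemma mspow_msh A m d : mspow (msh A) m d = if d == m then mxpow A m else 0.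
Proof.
elim: m d => [|m IH] [|d] //=; first by rewrite /msmul big_ord1 /msh mul0mx.
rewrite /msmul big_ord_recl /msh /= mul0mx add0r big_ord_recl /= subSS subn0 IH.
rewrite big1 ?addr0 => [|j _]; last by rewrite /= mul0mx.
by rewrite eqSS; case: (d == m); rewrite ?mulmx0.
Qed.

Lemma msexp_msh A : msexp (msh A) = msexph A.
Proof.
apply: funext => d; rewrite /msexp big_ord_recr /= mspow_msh eqxx.
by rewrite big1 ?add0r // => -[m hm] _; rewrite mspow_msh gtn_eqF // scaler0.
Qed.

Definition msadj X : ms := mseps (mstr X).

Lemma msadjK X : msadj (msadj X) = X.
Proof.
apply: funext => k; rewrite /msadj /mseps /mstr linearZ /= trmxK scalerA.
by rewrite -exprD addnn -muln2 exprM sqrr_sign scale1r.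
Qed.

Lemma msadjM X Y : msadj (msmul X Y) = msmul (msadj Y) (msadj X).
Proof.
apply: funext => k; rewrite /msadj /mseps /mstr msmul_rev /msmul.
rewrite linear_sum scaler_sumr; apply: eq_bigr => -[j hj] _ /=.
by rewrite trmx_mul -scalemxAl -scalemxAr scalerA -exprD subnKC // -ltnS.
Qed.

Lemma msadj1 : msadj ms1 = ms1.
Proof.
by apply: funext => -[|k]; rewrite /msadj /mseps /mstr /msone /= ?trmx1 ?trmx0 ?scale1r ?scaler0.
Qed.

Lemma msadj_pow X m : msadj (mspow X m) = mspow (msadj X) m.
Proof.
elim: m => [|m IH] /=; first exact: msadj1.
by rewrite msadjM IH -mspowSr.
Qed.

Lemma msadj_exp X : msadj (msexp X) = msexp (msadj X).
Proof.
apply: funext => d; rewrite /msadj /mseps /mstr /msexp linear_sum scaler_sumr.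
apply: eq_bigr => m _ /=.
by rewrite linearZ /= scalerA mulrC -scalerA -msadj_pow.
Qed.

Lemma msadj_const A : msadj (msconst A) = msconst A^T.
Proof.
by apply: funext => -[|k]; rewrite /msadj /mseps /mstr /msconst /= ?expr0 ?scale1r ?trmx0 ?scaler0.
Qed.

Lemma msadj_msh A : A^T = A -> msadj (msh A) = msopp (msh A).
Proof.
move=> sym_A; apply: funext => -[|[|k]];
  rewrite /msadj /mseps /mstr /msopp /msh /= ?trmx0 ?scaler0 ?oppr0 //.
by rewrite sym_A expr1 scaleN1r.
Qed.

Definition ms_unitary X := msmul X (msadj X) = ms1 /\ msmul (msadj X) X = ms1.

Lemma ms_unitaryP X : ms_unitary X -> unitary_eps X.
Proof. by move=> [XX' X'X] k; rewrite XX' X'X. Qed.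

Lemma ms_unitary1 : ms_unitary ms1.
Proof. by rewrite /ms_unitary msadj1 msmul1l. Qed.

Lemma ms_unitaryM X Y : ms_unitary X -> ms_unitary Y -> ms_unitary (msmul X Y).
Proof.
move=> [XX' X'X] [YY' Y'Y]; split; rewrite msadjM.
  by rewrite -msmulA (msmulA Y) YY' msmul1l XX'.
by rewrite -msmulA (msmulA (msadj X)) X'X msmul1l Y'Y.
Qed.

Lemma ms_unitary_adj X : ms_unitary X -> ms_unitary (msadj X).
Proof. by move=> [XX' X'X]; split; rewrite msadjK. Qed.

Lemma ms_unitary_inv X : ms_unitary X -> msinv X = msadj X.
Proof.
move=> [XX' X'X]; apply: msmul_linv_unique X'X _; apply: msmulV.
have := congr1 (fun F => F 0%N) XX'; rewrite /msmul big_ord1 /= => X0X0'.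
by case: (mulmx1_unit X0X0').
Qed.

Lemma ms_unitary_const A : A *m A^T = 1%:M -> ms_unitary (msconst A).
Proof. by move=> AA'; rewrite /ms_unitary msadj_const !msmul_const AA' (mulmx1C AA'). Qed.

End MatrixSeries.

Section MatrixSeriesExp.
Variables (R : numFieldType) (N : nat).
Local Notation ms1 := (msone R N).
Implicit Types (X : ms R N) (A : 'M[R]_N).

Lemma msmul_expN_exp X : X 0%N = 0 -> msmul (msexp (msopp X)) (msexp X) = ms1.
Proof.
move=> X0; apply: funext => d; rewrite /msmul.
have NX0 : msopp X 0%N = 0 by rewrite /msopp X0 oppr0.
pose c a b : R := (-1) ^+ a / a`!%:R * (b`!%:R)^-1.
transitivity (\sum_(j < d.+1) \sum_(a < d.+1) \sum_(b < d.+1)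
    c a b *: (mspow X a j *m mspow X b (d - j)%N)).
  apply: eq_bigr => -[j hj] _ /=.
  rewrite (msexp_widen NX0 hj) (msexp_widen X0 (K := d.+1)) ?ltnS ?leq_subr //.
  rewrite mulmx_suml; apply: eq_bigr => a _; rewrite mulmx_sumr; apply: eq_bigr => b _.
  by rewrite mspowN -!scalemxAl -scalemxAr !scalerA /c [_ * (-1) ^+ a]mulrC.
rewrite exchange_big /=; apply: etrans (sum_expN_exp_coef (f := mspow X ^~ d)
  (ltn0Sn d) (fun m => mspow_eq0 (m := m) X0)).
apply: eq_bigr => a _; rewrite exchange_big /=; apply: eq_bigr => b _.
by rewrite -scaler_sumr -mspowD.
Qed.

Lemma ms_unitary_exp X : X 0%N = 0 -> msadj X = msopp X -> ms_unitary (msexp X).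
Proof.
move=> X0 adjX; rewrite /ms_unitary msadj_exp adjX; split; last exact: msmul_expN_exp.
by rewrite -{1}(msoppK X) msmul_expN_exp // /msopp X0 oppr0.
Qed.

Lemma ms_unitary_exph A : A^T = A -> ms_unitary (msexph A).
Proof. by move=> sym_A; rewrite -msexp_msh; apply: ms_unitary_exp; rewrite ?msadj_msh. Qed.

End MatrixSeriesExp.

Section Antipode.
Variables (R : fieldType) (L : eqType).
Implicit Types F G : nser R L.

Definition nsantipode F : nser R L := fun w => (-1) ^+ size w * F (rev w).

Lemma nsantipodeM F G w :
  nsantipode (nsmul F G) w = nsmul (nsantipode G) (nsantipode F) w.
Proof.
rewrite /nsantipode /nsmul size_rev mulr_sumr (reindex_inj rev_ord_inj).
apply: eq_bigr => -[j hj] _ /=; rewrite ltnS in hj.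
rewrite subSS take_rev drop_rev subKn // size_takel // size_drop.
by rewrite -{1}(subnKC hj) exprD; ring.
Qed.

Lemma lie_poly_antipode F :
  lie_poly F -> (forall w, nsantipode F w = - F w) /\ F [::] = 0.
Proof.
rewrite /nsantipode; elim => {F}.
- move=> a; split => // w; rewrite /nsletter.
  have [-> | w_neq] := eqVneq w [:: a]; first by rewrite /= eqxx expr1 mulr1.
  case: eqP => [/(congr1 rev) | _]; last by rewrite mulr0 oppr0.
  by rewrite revK /= => w_eq; rewrite w_eq eqxx in w_neq.
- by split => // w; rewrite /nszero mulr0 oppr0.
- move=> F G _ [SF F0] _ [SG G0]; split; last by rewrite /nsadd F0 G0 addr0.
  by move=> w; rewrite /nsadd mulrDr SF SG opprD.
- move=> c F _ [SF F0]; split; last by rewrite /nsscale F0 mulr0.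
  by move=> w; rewrite /nsscale mulrCA SF mulrN.
- move=> F G _ [SF F0] _ [SG G0]; split; last first.
    by rewrite /nsbr /nssub /nsmul !big_ord1 /= mulrC subrr.
  move=> w; rewrite /nsbr /nssub mulrBr.
  rewrite -/(nsantipode _ w) -/(nsantipode (nsmul G F) w) !nsantipodeM /nsmul opprB.
  by congr (_ - _); apply: eq_bigr => j _; rewrite /nsantipode SF SG mulrNN mulrC.
- by move=> F G FG _ [SF F0]; split => [w|]; rewrite -!FG.
Qed.

Lemma lie_series_antipode F :
  lie_series F -> nsantipode F = (fun w => - F w) /\ F [::] = 0.
Proof.
move=> lieF; split.
  apply: funext => w; have [SF _] := lie_poly_antipode (lieF (size w)).
  by have := SF w; rewrite /nsantipode /nshom size_rev eqxx.
by have [_] := lie_poly_antipode (lieF 0%N).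
Qed.

End Antipode.

Lemma size_bwords k u : u \in bwords k -> size u = k.
Proof.
elim: k u => [|k IH] u /=; first by rewrite inE => /eqP ->.
by rewrite !mem_cat in_nil orbF => /orP[] /mapP[v /IH v_size ->] /=; rewrite v_size.
Qed.

Section BigBwords.
Variable V : zmodType.
Implicit Type F : seq bool -> V.

Lemma big_bwordsS k F : \sum_(u <- bwords k.+1) F u =
  \sum_(u <- bwords k) F (false :: u) + \sum_(u <- bwords k) F (true :: u).
Proof. by rewrite /= !big_cat big_nil !big_map Monoid.mulm1. Qed.

Lemma big_bwordsD a b F : \sum_(u <- bwords (a + b)) F u =
  \sum_(u1 <- bwords a) \sum_(u2 <- bwords b) F (u1 ++ u2).
Proof.
elim: a F => [|a IH] F; first by rewrite /= big_seq1.
by rewrite addSn !big_bwordsS !IH.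
Qed.

Lemma big_bwords_rev k F :
  \sum_(u <- bwords k) F (rev u) = \sum_(u <- bwords k) F u.
Proof.
elim: k F => [|k IH] F; first by rewrite /= !big_seq1.
rewrite big_bwordsS.
under eq_bigr do rewrite rev_cons.
under [X in _ + X]eq_bigr do rewrite rev_cons.
rewrite (IH (fun v => F (rcons v false))) (IH (fun v => F (rcons v true))).
rewrite -addn1 big_bwordsD -big_split /=; apply: eq_bigr => u _.
by rewrite big_cons big_seq1 !cats1.
Qed.

End BigBwords.

Section Substitution.
Variables (R : fieldType) (N : nat) (P Q : 'M[R]_N).
Local Notation Sub F := (mssubst F P Q).
Local Notation word := (mxword P Q).
Implicit Types F G : seq bool -> R.

Lemma mxword_cons b u : word (b :: u) = (if b then Q else P) *m word u.
Proof. by []. Qed.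

Lemma mxword_cat u v : word (u ++ v) = word u *m word v.
Proof.
elim: u => [|b u IH]; first by rewrite /= mul1mx.
by rewrite cat_cons !mxword_cons IH mulmxA.
Qed.

Lemma trmx_mxword u : P^T = P -> Q^T = Q -> (word u)^T = word (rev u).
Proof.
move=> sym_P sym_Q; elim: u => [|b u IH]; first by rewrite /mxword /= trmx1.
rewrite mxword_cons trmx_mul IH rev_cons -cats1 mxword_cat mxword_cons.
by rewrite [word [::]]/= mulmx1; case: b; rewrite ?sym_P ?sym_Q.
Qed.

Lemma mssubst0 F : Sub F 0%N = F [::] *: 1%:M.
Proof. by rewrite /mssubst /= big_seq1. Qed.

Lemma mssubst_nsone : Sub (@nsone R bool) = msone R N.
Proof.
apply: funext => -[|k]; rewrite /mssubst /msone; first by rewrite /= big_seq1 scale1r.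
rewrite big_seq big1 // => u /size_bwords; case: u => // b u _; exact: scale0r.
Qed.

Lemma mssubst_nsmul F G : Sub (nsmul F G) = msmul (Sub F) (Sub G).
Proof.
apply: funext => k; rewrite /mssubst /msmul.
transitivity (\sum_(j < k.+1) \sum_(u <- bwords k) (F (take j u) * G (drop j u)) *: word u).
  rewrite [RHS]exchange_big /= big_seq [RHS]big_seq; apply: eq_bigr => u u_in.
  by rewrite /nsmul (size_bwords u_in) scaler_suml.
apply: eq_bigr => -[j hj] _ /=; rewrite ltnS in hj.
rewrite -{1}(subnKC hj) big_bwordsD mulmx_suml big_seq [RHS]big_seq.
apply: eq_bigr => u1 u1_in; rewrite mulmx_sumr; apply: eq_bigr => u2 _.
rewrite take_size_cat ?drop_size_cat ?(size_bwords u1_in) // mxword_cat.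
by rewrite -scalemxAl -scalemxAr scalerA.
Qed.

Lemma mssubst_nsexpn F m : Sub (nsexpn F m) = mspow (Sub F) m.
Proof.
by elim: m => [|m IH] /=; rewrite ?mssubst_nsone // mssubst_nsmul IH.
Qed.

Lemma mssubst_nsexp F : Sub (nsexp F) = msexp (Sub F).
Proof.
apply: funext => d; rewrite /mssubst /msexp /nsexp.
transitivity (\sum_(m < d.+1) \sum_(u <- bwords d)
                ((m`!%:R)^-1 * nsexpn F m u) *: word u).
  rewrite [RHS]exchange_big /= big_seq [RHS]big_seq; apply: eq_bigr => u u_in.
  by rewrite (size_bwords u_in) scaler_suml.
apply: eq_bigr => m _; rewrite -mssubst_nsexpn /mssubst scaler_sumr.
by apply: eq_bigr => u _; rewrite scalerA.
Qed.

Lemma mssubstN F : Sub (fun u => - F u) = msopp (Sub F).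
Proof.
apply: funext => k; rewrite /mssubst /msopp -sumrN.
by apply: eq_bigr => u _; rewrite scaleNr.
Qed.

Lemma msadj_mssubst F : P^T = P -> Q^T = Q -> msadj (Sub F) = Sub (nsantipode F).
Proof.
move=> sym_P sym_Q; apply: funext => k.
rewrite /msadj /mseps /mstr /mssubst linear_sum scaler_sumr.
rewrite -(big_bwords_rev k (fun u => nsantipode F u *: word u)) big_seq [RHS]big_seq.
apply: eq_bigr => u u_in; rewrite linearZ /= trmx_mxword // /nsantipode.
by rewrite size_rev revK (size_bwords u_in) scalerA mulrC.
Qed.

End Substitution.

Lemma ms_unitary_associator (R : numFieldType) N (Phi : seq bool -> R) (P Q : 'M[R]_N) :
  grouplike Phi -> P^T = P -> Q^T = Q -> ms_unitary (mssubst Phi P Q).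
Proof.
move=> [Psi [lie_Psi Phi_exp]] sym_P sym_Q.
have [S_Psi Psi0] := lie_series_antipode lie_Psi.
rewrite (funext Phi_exp) mssubst_nsexp; apply: ms_unitary_exp.
  by rewrite mssubst0 Psi0 scale0r.
by rewrite msadj_mssubst // S_Psi mssubstN.
Qed.

Lemma trmx_phil (R : fieldType) n N (phi : 'I_n -> 'I_n -> 'M[R]_N) c :
  (forall i j, (phi i j)^T = phi i j) -> (phil phi c)^T = phil phi c.
Proof.
move=> sym_phi; rewrite /phil linear_sum; apply: eq_bigr => j _.
by rewrite linear_sum; apply: eq_bigr => k _; rewrite linearZ /= sym_phi.
Qed.

Section BraidRepresentation.
Variables (R : numFieldType) (n N : nat).
Variables (rho : {perm 'I_n} -> 'M[R]_N) (phi : 'I_n -> 'I_n -> 'M[R]_N).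
Variables (Phi : seq bool -> R) (cx cy : 'I_n.-1 -> 'I_n -> 'I_n -> R).
Hypotheses (Phi_grouplike : grouplike Phi)
  (rho_orthogonal : forall w, rho w *m (rho w)^T = 1%:M)
  (phi_sym : forall i j, (phi i j)^T = phi i j).

Lemma ms_unitary_Bn_gen i : ms_unitary (Bn_gen rho phi Phi cx cy i).
Proof.
have unitary_Phi := ms_unitary_associator Phi_grouplike
  (trmx_phil (cx i) phi_sym) (trmx_phil (cy i) phi_sym).
rewrite /Bn_gen ms_unitary_inv //.
apply: ms_unitaryM; first exact: ms_unitary_adj.
apply: ms_unitaryM; first exact: ms_unitary_const.
by apply: ms_unitaryM => //; apply: ms_unitary_exph.
Qed.

Lemma ms_unitary_Bn_word w : ms_unitary (Bn_word rho phi Phi cx cy w).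
Proof.
elim: w => [|[b i] w IH] /=; first exact: ms_unitary1.
have unitary_gen := ms_unitary_Bn_gen i.
apply: ms_unitaryM => //; case: b => //=.
by rewrite ms_unitary_inv //; apply: ms_unitary_adj.
Qed.

End BraidRepresentation.

Unset Implicit Arguments.
Theorem mainTheorem6 (R : realType) (n N : nat)
  (rho : {perm 'I_n} -> 'M[R]_N) (phi : 'I_n -> 'I_n -> 'M[R]_N)
  (Phi : seq bool -> R) (cx cy : 'I_n.-1 -> 'I_n -> 'I_n -> R) :
  rho 1%g = 1%:M ->
  (forall w v : {perm 'I_n}, rho (v * w)%g = rho w *m rho v) ->
  is_Tn_rep phi ->
  (forall (w : {perm 'I_n}) (i j : 'I_n),
      rho w *m phi i j *m invmx (rho w) = phi (w i) (w j)) ->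
  drinfeld_associator Phi ->
  (forall i : 'I_n.-1, val i = 0%N -> forall j k, cx i j k = 0 /\ cy i j k = 0) ->
  (forall i j : 'I_n.-1, (i.+1 < j)%N -> forall k,
      msmul (Bn_gen rho phi Phi cx cy i) (Bn_gen rho phi Phi cx cy j) k =
      msmul (Bn_gen rho phi Phi cx cy j) (Bn_gen rho phi Phi cx cy i) k) ->
  (forall i j : 'I_n.-1, val j = (val i).+1 -> forall k,
      msmul (Bn_gen rho phi Phi cx cy i)
        (msmul (Bn_gen rho phi Phi cx cy j) (Bn_gen rho phi Phi cx cy i)) k =
      msmul (Bn_gen rho phi Phi cx cy j)
        (msmul (Bn_gen rho phi Phi cx cy i) (Bn_gen rho phi Phi cx cy j)) k) ->
  (forall w : {perm 'I_n}, rho w *m (rho w)^T = 1%:M) ->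
  (forall i j : 'I_n, (phi i j)^T = phi i j) ->
  forall w : seq (bool * 'I_n.-1), unitary_eps (Bn_word rho phi Phi cx cy w).
Proof.
move=> _ _ _ _ [Phi_grouplike _ _ _] _ _ _ rho_orthogonal phi_sym w.
exact/ms_unitaryP/ms_unitary_Bn_word.
Qed.
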